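(* Let $\Delta,\Sigma$ be alphabets, $\varphi:\Delta\to2^{\Sigma^*}$ a regular language substitution, $R\subseteq\Sigma^*$ a regular language, and $M'\subseteq\Delta^*$ a regular language that has 1-word summaries and satisfies $\varphi(M')\subseteq R$. Then there exists $w\in M'$ with $\varphi(w)=R$ if and only if there exists a finite subset $F\subseteq M'$ with $\varphi(F)=\varphi(M')=R$.
   Context: A regular language substitution $\varphi:\Delta\to2^{\Sigma^*}$ maps each symbol to a regular language over $\Sigma$, extended to words by $\varphi(\varepsilon)=\{\varepsilon\}$, $\varphi(\delta w)=\varphi(\delta)\varphi(w)$, and to sets of words by $\varphi(L)=\bigcup_{w\in L}\varphi(w)$. A language $M'\subseteq\Delta^*$ has 1-word summaries if for every finite subset $F\subseteq M'$ there exists a word $w\in M'$ with $\varphi(F)\subseteq\varphi(w)$. *)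

From mathcomp Require Import all_boot.
Set Implicit Arguments. Unset Strict Implicit. Unset Printing Implicit Defensive.

Definition lang (S : finType) := seq S -> Prop.

Record dfa (S : finType) := DFA {
  dfa_state : finType;
  dfa_start : dfa_state;
  dfa_final : pred dfa_state;
  dfa_trans : dfa_state -> S -> dfa_state }.

Definition dfa_accept (S : finType) (A : dfa S) (w : seq S) : bool :=
  @dfa_final S A (foldl (@dfa_trans S A) (@dfa_start S A) w).

Definition regular (S : finType) (L : lang S) : Prop :=
  exists A : dfa S, forall w, L w <-> dfa_accept A w.

Definition conc (S : finType) (L1 L2 : lang S) : lang S :=
  fun u => exists u1 u2, u = u1 ++ u2 /\ L1 u1 /\ L2 u2.

Fixpoint subst_word (D S : finType) (phi : D -> lang S) (w : seq D) : lang S :=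
  match w with
  | [::] => fun u => u = [::]
  | d :: w' => conc (phi d) (subst_word phi w')
  end.

Definition subst_lang (D S : finType) (phi : D -> lang S) (L : lang D) : lang S :=
  fun u => exists w, L w /\ subst_word phi w u.

Definition regular_subst (D S : finType) (phi : D -> lang S) : Prop :=
  forall d, regular (phi d).

(* Finite subsets of M are given as finite sequences of words of M. *)
Definition fin_sub (D : finType) (F : seq (seq D)) (M : lang D) : Prop :=
  forall w, w \in F -> M w.

Definition lang_of_seq (D : finType) (F : seq (seq D)) : lang D :=
  fun w => w \in F.

Definition one_word_summaries (D S : finType) (phi : D -> lang S) (M : lang D) : Prop :=
  forall F : seq (seq D), fin_sub F M ->
    exists w, M w /\ (forall u, subst_lang phi (lang_of_seq F) u -> subst_word phi w u).

Definition lang_eq (S : finType) (L1 L2 : lang S) : Prop := forall u, L1 u <-> L2 u.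
Definition lang_sub (S : finType) (L1 L2 : lang S) : Prop := forall u, L1 u -> L2 u.

From mathcomp Require Import all_boot.
Set Implicit Arguments. Unset Strict Implicit. Unset Printing Implicit Defensive.

(* Neither direction uses regularity: the word w is itself the finite subset
   [:: w], and conversely a 1-word summary of a finite F with phi(F) = R
   satisfies R <= phi(w) <= phi(M') <= R. *)

Section Substitution.

Variables (D S : finType) (phi : D -> lang S).

Lemma subst_word_sub_lang (M : lang D) (w : seq D) :
  M w -> lang_sub (subst_word phi w) (subst_lang phi M).
Proof. by move=> Mw u Hu; exists w. Qed.

Lemma subst_lang_seq1 (w : seq D) :
  lang_eq (subst_lang phi (lang_of_seq [:: w])) (subst_word phi w).
Proof.
move=> u; split; last by apply: subst_word_sub_lang; rewrite /lang_of_seq inE.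
by case=> v []; rewrite /lang_of_seq inE => /eqP ->.
Qed.

Lemma fin_sub_seq1 (M : lang D) (w : seq D) : M w -> fin_sub [:: w] M.
Proof. by move=> Mw v; rewrite inE => /eqP ->. Qed.

Variables (R : lang S) (M : lang D).
Hypothesis subMR : lang_sub (subst_lang phi M) R.

Lemma subst_lang_eq_of_word (w : seq D) :
  M w -> lang_sub R (subst_word phi w) -> lang_eq (subst_lang phi M) R.
Proof. by move=> Mw subRw u; split=> [/subMR | /subRw /(subst_word_sub_lang Mw)]. Qed.

Lemma subst_word_eq_of_sub (w : seq D) :
  M w -> lang_sub R (subst_word phi w) -> lang_eq (subst_word phi w) R.
Proof. by move=> Mw subRw u; split=> [/(subst_word_sub_lang Mw)/subMR | /subRw]. Qed.

End Substitution.

Theorem proposition13 (D S : finType) (phi : D -> lang S) (R : lang S) (M' : lang D) :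
  regular_subst phi -> regular R -> regular M' ->
  one_word_summaries phi M' ->
  lang_sub (subst_lang phi M') R ->
  (exists w, M' w /\ lang_eq (subst_word phi w) R) <->
  (exists F : seq (seq D), fin_sub F M' /\
     lang_eq (subst_lang phi (lang_of_seq F)) (subst_lang phi M') /\
     lang_eq (subst_lang phi M') R).
Proof.
move=> _ _ _ summaries subMR; split.
- case=> w [Mw wR].
  have MR := subst_lang_eq_of_word subMR Mw (fun u => proj2 (wR u)).
  exists [:: w]; split; first exact: fin_sub_seq1.
  split=> // u; split=> [/subst_lang_seq1/wR/MR | /MR/wR/subst_lang_seq1] //.
- case=> F [FM [FM' MR]].
  have [w [Mw Fw]] := summaries F FM.
  exists w; split=> //.
  by apply: (subst_word_eq_of_sub subMR Mw) => u /MR /FM' /Fw.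
Qed.
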